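(* Let $a=1$. Define $\boldsymbol{\alpha}_0=\boldsymbol{\beta}_0=1$ and, for $n\ge1$, \[ \boldsymbol{\alpha}_n(1,k)=(-1)^n(q^{-n}+q^{n}),\qquad \boldsymbol{\beta}_n(1,k)=(-1)^n\frac{(k^2;q^2)_{n}(1+kq^{2n})}{(1+k)q^n(q^2;q^2)_n}. \] Then $(\boldsymbol{\alpha}_n(1,k),\boldsymbol{\beta}_n(1,k))$ is a WP-Bailey pair relative to $a=1$.
   Context: Notation: $(x;q)_n=\prod_{i=0}^{n-1}(1-xq^i)$. A pair of sequences $(\boldsymbol{\alpha}_n(a,k,q),\boldsymbol{\beta}_n(a,k,q))_{n\ge0}$ is a WP-Bailey pair (relative to $a$, with parameter $k$) if $\boldsymbol{\alpha}_0=1$ and for all $n\ge0$ \[\boldsymbol{\beta}_n=\sum_{j=0}^n\frac{(k/a;q)_{n-j}(k;q)_{n+j}}{(q;q)_{n-j}(aq;q)_{n+j}}\boldsymbol{\alpha}_j.\] *)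

From HB Require Import structures.
From mathcomp Require Import all_boot all_order all_algebra.
Set Implicit Arguments. Unset Strict Implicit. Unset Printing Implicit Defensive.
Import Order.TTheory GRing.Theory Num.Theory.
Local Open Scope ring_scope.

Definition qpoch (F : fieldType) (x q : F) (n : nat) : F :=
  \prod_(i < n) (1 - x * q ^+ i).

Definition is_WP_Bailey_pair (F : fieldType) (a k q : F)
  (alpha beta : nat -> F) : Prop :=
  alpha 0%N = 1 /\
  forall n : nat,
    beta n = \sum_(j < n.+1)
      (qpoch (k / a) q (n - j) * qpoch k q (n + j))
        / (qpoch q q (n - j) * qpoch (a * q) q (n + j)) * alpha j.

Definition alpha_1 (F : fieldType) (k q : F) (n : nat) : F :=
  if n == 0%N then 1 else (-1) ^+ n * (q ^- n + q ^+ n).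

Definition beta_1 (F : fieldType) (k q : F) (n : nat) : F :=
  if n == 0%N then 1 else
    (-1) ^+ n * (qpoch (k ^+ 2) (q ^+ 2) n * (1 + k * q ^+ (2 * n)))
      / ((1 + k) * q ^+ n * qpoch (q ^+ 2) (q ^+ 2) n).

From HB Require Import structures.
From mathcomp Require Import all_boot all_order all_algebra.
From mathcomp Require Import ring zify.
Set Implicit Arguments.
Unset Strict Implicit.
Import GRing.Theory.
Local Open Scope ring_scope.

(* With a = 1 the WP-Bailey kernel factors as c(n-j) c(n+j),
   where c i = (k;q)_i / (q;q)_i are the coefficients of the q-binomial
   series f(t) = (kt;q)_oo / (t;q)_oo.  Let D_m(x, y) be the coefficient of
   t^m in f(xt) f(yt) (a Cauchy product).  Folding the sum over j of
   D_{2n}(-q, 1) around its middle index shows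
       D_{2n}(-q, 1) = (-q)^n * sum_j c(n-j) c(n+j) alpha_j,
   so beta_n is determined by B_m := D_m(-q, 1).  The functional equations
   f(t) - f(qt) = t (f(t) - k f(qt)) give two first-order recurrences that
   determine (A_{m+1}, B_{m+1}) from (A_m, B_m), where A_m := D_m(-1, 1).
   An induction on n then yields closed forms for A_{2n}, B_{2n} (and for
   the odd indices), and the closed form of B_{2n} is exactly the claimed
   beta_n up to the factor (-q)^n. *)

Lemma sum_fold_center (R : nmodType) (g : nat -> R) (n : nat) :
  \sum_(0 <= i < (2 * n).+1) g i
  = g n + \sum_(0 <= j < n) (g (n - j.+1)%N + g (n + j.+1)%N).
Proof.
rewrite (big_cat_nat _ (n := n)) //=; last by lia.
rewrite [X in _ + X]big_ltn; last by lia.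
rewrite addrCA big_split /=; congr (_ + (_ + _)).
  by rewrite big_nat_rev /= add0n.
rewrite -{1}(add0n n.+1) big_addn.
have -> : ((2 * n).+1 - n.+1 = n)%N by lia.
by apply: eq_big_nat => j _; rewrite addnC addnS.
Qed.

Lemma neg_pow_pair (F : fieldType) (q : F) (n j : nat) : q != 0 -> (j <= n)%N ->
  (- q) ^+ (n - j) + (- q) ^+ (n + j)
  = (- q) ^+ n * ((-1) ^+ j * (q ^- j + q ^+ j)).
Proof.
move=> q0 jn.
have nq_unit : - q \is a GRing.unit by rewrite unitfE oppr_eq0.
rewrite exprB // exprD -mulrDr; congr (_ * _).
by rewrite -[- q]mulN1r exprMn invfM -exprVn invrN1 mulrDr.
Qed.

(* Coefficients D_m(x, y) of the Cauchy product f(xt) f(yt) for a power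
   series f with coefficient sequence b. *)
Section CauchyProduct.
Variables (R : comPzRingType) (b : nat -> R).

Definition cauchy (m : nat) (x y : R) : R :=
  \sum_(0 <= i < m.+1) b i * x ^+ i * (b (m - i) * y ^+ (m - i)).

Lemma cauchy_sym m x y : cauchy m x y = cauchy m y x.
Proof.
rewrite /cauchy big_nat_rev /=.
apply: eq_big_nat => i /andP [_ hi].
by rewrite add0n subSS subKn 1?mulrC // -ltnS.
Qed.

Lemma cauchy_scale m c x y : cauchy m (c * x) (c * y) = c ^+ m * cauchy m x y.
Proof.
rewrite /cauchy mulr_sumr; apply: eq_big_nat => i /andP [_ hi].
have -> : c ^+ m = c ^+ i * c ^+ (m - i) by rewrite -exprD subnKC // -ltnS.
by rewrite !exprMn; ring.
Qed.

(* If b obeys the recurrence of the q-binomial series, i.e. its generating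
   function satisfies f(t) - f(qt) = t (f(t) - k f(qt)), then D satisfies
   the corresponding difference equation in each argument. *)
Variables k q : R.
Hypothesis b_rec : forall i, b i.+1 * (1 - q * q ^+ i) = b i * (1 - k * q ^+ i).

Lemma cauchy_shift_left m x y :
  cauchy m.+1 x y - cauchy m.+1 (q * x) y
  = x * (cauchy m x y - k * cauchy m (q * x) y).
Proof.
rewrite /cauchy !(big_nat_recl m.+1) // !expr0 !subn0 !mulr1.
rewrite opprD addrACA subrr add0r -sumrB mulrBr mulrA !mulr_sumr -sumrB.
apply: eq_big_nat => i _; rewrite subSS !exprS !exprMn.
transitivity (b i.+1 * (1 - q * q ^+ i) * x * x ^+ i * (b (m - i) * y ^+ (m - i)));
  first ring.
by rewrite b_rec; ring.
Qed.

Lemma cauchy_shift_right m x y :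
  cauchy m.+1 x y - cauchy m.+1 x (q * y)
  = y * (cauchy m x y - k * cauchy m x (q * y)).
Proof. by rewrite ![cauchy _ x _]cauchy_sym cauchy_shift_left. Qed.

Definition cauchyA m := cauchy m (-1) 1.
Definition cauchyB m := cauchy m (- q) 1.

Lemma cauchyAB_rec1 m :
  cauchyA m.+1 - cauchyB m.+1 = k * cauchyB m - cauchyA m.
Proof. by rewrite /cauchyA /cauchyB -[- q]mulrN1 cauchy_shift_left; ring. Qed.

Lemma cauchyAB_rec2 m :
  cauchyB m.+1 - q ^+ m.+1 * cauchyA m.+1 = cauchyB m - k * q ^+ m * cauchyA m.
Proof.
have scaled j : cauchy j (- q) (q * 1) = q ^+ j * cauchyA j.
  by rewrite /cauchyA -cauchy_scale mulrN1.
by have := cauchy_shift_right m (- q) 1; rewrite !scaled mul1r mulrA.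
Qed.

End CauchyProduct.

Lemma solve_two_by_two (F : fieldType) (X Y r s c : F) : 1 - c != 0 ->
  X - Y = r -> Y - c * X = s -> X = (r + s) / (1 - c) /\ Y = X - r.
Proof.
move=> c1 h1 h2; split; last by rewrite -h1; ring.
apply: (canRL (mulfK c1)); rewrite -h1 -h2; ring.
Qed.

Lemma qpoch0 (F : fieldType) (x r : F) : qpoch x r 0 = 1.
Proof. by rewrite /qpoch big_ord0. Qed.

Lemma qpochS (F : fieldType) (x r : F) n :
  qpoch x r n.+1 = qpoch x r n * (1 - x * r ^+ n).
Proof. by rewrite /qpoch big_ord_recr. Qed.

Section WPBaileyOne.
Variables (F : fieldType) (k q : F).

Definition qbin_coef i := qpoch k q i / qpoch q q i.

Notation A := (cauchyA qbin_coef).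
Notation B := (cauchyB qbin_coef q).
Notation P n := (qpoch (k ^+ 2) (q ^+ 2) n).
Notation Q n := (qpoch (q ^+ 2) (q ^+ 2) n).

Lemma cauchyB_fold n : q != 0 ->
  B (2 * n) = (- q) ^+ n *
    \sum_(0 <= j < n.+1) (qbin_coef (n - j) * qbin_coef (n + j)) * alpha_1 k q j.
Proof.
move=> q0.
rewrite /cauchyB /cauchy sum_fold_center big_nat_recl // /alpha_1 /=.
rewrite subn0 addn0 mulr1 mulrDr; congr (_ + _).
  have -> : (2 * n - n = n)%N by lia.
  by rewrite expr1n; ring.
rewrite mulr_sumr; apply: eq_big_nat => j /andP [_ hj].
have -> : (2 * n - (n - j.+1) = n + j.+1)%N by lia.
have -> : (2 * n - (n + j.+1) = n - j.+1)%N by lia.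
rewrite !expr1n !mulr1.
transitivity (qbin_coef (n - j.+1) * qbin_coef (n + j.+1)
              * ((- q) ^+ (n - j.+1) + (- q) ^+ (n + j.+1))); first ring.
by rewrite neg_pow_pair //; ring.
Qed.

Hypothesis q_nonroot : forall m : nat, (0 < m)%N -> q ^+ m != 1.
Hypothesis k_ne : 1 + k != 0.

Lemma one_sub_qpow m : (0 < m)%N -> 1 - q ^+ m != 0.
Proof. by move=> m0; rewrite subr_eq0 eq_sym q_nonroot. Qed.

Lemma qpoch_q_neq0 n : qpoch q q n != 0.
Proof. by apply/prodf_neq0 => i _; rewrite -exprS one_sub_qpow. Qed.

Lemma qpoch_q2_neq0 n : qpoch (q ^+ 2) (q ^+ 2) n != 0.
Proof.
by apply/prodf_neq0 => i _; rewrite -exprM -exprD one_sub_qpow // addn_gt0.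
Qed.

Lemma qbin_coef_rec i :
  qbin_coef i.+1 * (1 - q * q ^+ i) = qbin_coef i * (1 - k * q ^+ i).
Proof.
rewrite /qbin_coef !qpochS.
have h1 := qpoch_q_neq0 i.
have h2 : 1 - q * q ^+ i != 0 by rewrite -exprS one_sub_qpow.
by field; rewrite h1 h2.
Qed.

Lemma cauchyAB_step m :
  A m.+1 = ((k * B m - A m) + (B m - k * q ^+ m * A m)) / (1 - q ^+ m.+1) /\
  B m.+1 = A m.+1 - (k * B m - A m).
Proof.
exact: solve_two_by_two (one_sub_qpow _) (cauchyAB_rec1 qbin_coef_rec m)
                  (cauchyAB_rec2 qbin_coef_rec m).
Qed.

Lemma cauchyAB_even n :
  A (2 * n) = P n / Q n /\
  B (2 * n) = P n / Q n * (1 + k * (q ^+ 2) ^+ n) / (1 + k).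
Proof.
elim: n => [|n [IA IB]].
  rewrite muln0 /cauchyA /cauchyB /cauchy /qbin_coef !big_nat1 !qpoch0.
  by rewrite !expr0 !divr1 !mulr1 mul1r divff.
have hQ := qpoch_q2_neq0 n.
have q2n : q ^+ (2 * n) = (q ^+ 2) ^+ n by rewrite exprM.
have e1 : q ^+ (2 * n).+1 = q * (q ^+ 2) ^+ n by rewrite -q2n exprS.
have e2 : q ^+ (2 * n).+2 = q ^+ 2 * (q ^+ 2) ^+ n by rewrite -q2n -exprD add2n.
have hc1 : 1 - q * (q ^+ 2) ^+ n != 0 by rewrite -e1 one_sub_qpow.
have hc2 : 1 - q ^+ 2 * (q ^+ 2) ^+ n != 0 by rewrite -e2 one_sub_qpow.
have [OA OB] : A (2 * n).+1 = 0 /\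
    B (2 * n).+1 = P n / Q n * (1 - k ^+ 2 * (q ^+ 2) ^+ n) / (1 + k).
  have [stepA stepB] := cauchyAB_step (2 * n).
  rewrite stepB stepA IA IB q2n e1.
  by split; field; rewrite k_ne hQ hc1.
have -> : (2 * n.+1)%N = (2 * n).+2 by lia.
have [stepA stepB] := cauchyAB_step (2 * n).+1.
rewrite stepB stepA OA OB !qpochS [(q ^+ 2) ^+ n.+1]exprS e1 e2.
by split; field; rewrite k_ne hQ hc2.
Qed.

End WPBaileyOne.

Theorem mainTheorem8 (F : fieldType) (k q : F)
  (hq0 : q != 0)
  (hqroot : forall m : nat, (0 < m)%N -> q ^+ m != 1)
  (hk : 1 + k != 0) :
  is_WP_Bailey_pair 1 k q (alpha_1 k q) (beta_1 k q).
Proof.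
split=> // n; rewrite divr1 mul1r.
(* With a = 1 the kernel is c(n-j) c(n+j), c = qbin_coef. *)
under eq_bigr do rewrite -mulf_div.
rewrite -(big_mkord xpredT (fun j => qbin_coef k q (n - j) * qbin_coef k q (n + j)
                                     * alpha_1 k q j)).
case: n => [|n].
  by rewrite big_nat1 /beta_1 /alpha_1 /qbin_coef !qpoch0 !divr1 !mulr1.
have hqn : q ^+ n.+1 != 0 by rewrite expf_neq0.
have hQ := qpoch_q2_neq0 hqroot n.+1.
have [_ closedB] := cauchyAB_even hqroot hk n.+1.
have := cauchyB_fold k n.+1 hq0; rewrite closedB => /esym/(canRL (mulKf _)) ->;
  last by rewrite expf_neq0 // oppr_eq0.
rewrite -[- q]mulN1r exprMn invfM -exprVn invrN1 /beta_1 /= -exprM.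
by field; rewrite hQ hqn hk.
Qed.
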